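(* Let $A$ be an $n \times n$ real symmetric matrix and let $\alpha \subseteq \{1,2,\dots,n\}$ with $|\alpha| \geq 2$. Then $\alpha$ is a P-set of $A$ if and only if every subset $\gamma \subseteq \alpha$ with $|\gamma| = 2$ is a P-set of $A$.
   Context: All matrices are real. For an $n\times n$ matrix $A$ and $\alpha \subseteq \{1,\dots,n\}$, $A(\alpha)$ denotes the principal submatrix obtained by deleting the rows and columns indexed by $\alpha$, and $\nu(A)$ denotes the nullity of $A$. A set $\alpha$ is a P-set of $A$ if $\nu(A(\alpha)) = \nu(A) + |\alpha|$. *)

From HB Require Import structures.
From mathcomp Require Import all_boot all_order all_algebra.
Set Implicit Arguments. Unset Strict Implicit. Unset Printing Implicit Defensive.
Import GRing.Theory Num.Theory.
Local Open Scope ring_scope.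

Definition nullity (F : fieldType) (m : nat) (A : 'M[F]_m) : nat := (m - \rank A)%N.

(* A(alpha): principal submatrix obtained by deleting rows and columns in alpha,
   i.e. keeping the indices in the complement, in increasing order. *)
Definition del_princ (F : fieldType) (n : nat) (A : 'M[F]_n) (alpha : {set 'I_n})
  : 'M[F]_#|~: alpha| :=
  \matrix_(i, j) A (enum_val i) (enum_val j).

Definition Pset (F : fieldType) (n : nat) (A : 'M[F]_n) (alpha : {set 'I_n}) : Prop :=
  nullity (del_princ A alpha) = (nullity A + #|alpha|)%N.

From HB Require Import structures.
From mathcomp Require Import all_boot all_order all_algebra.
From mathcomp Require Import zify.
Import GRing.Theory Num.Theory.
Local Open Scope ring_scope.
Set Implicit Arguments. Unset Strict Implicit. Unset Printing Implicit Defensive.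

(* For symmetric A, alpha is a P-set exactly when every unit vector e_i with
   i in alpha is a combination x A of the rows of A with x vanishing on alpha.
   Writing A(alpha) = P A P^T for the selection matrix P of the complement,
   nu(A(alpha)) splits as rank (K P A) + rank (ker (P A)) with K = ker (P A P^T);
   the first term is at most |alpha| and the second at most nu(A), and equality
   in both is the above condition: the first is literally the span condition,
   and the second follows from it because x A = e_l and z A = 0 force z_l = 0.
   For the pair criterion, given i in alpha take a certificate x for {i, j};
   for any other l in alpha, a certificate x' for {i, l} gives (x - x') A = 0,
   hence x_l = x'_l = 0, so x certifies e_i for all of alpha. *)

Section KeepMx.
Variables (F : fieldType) (n : nat) (b : {set 'I_n}).

Definition keep_mx : 'M[F]_(#|~: b|, n) := \matrix_(i, j) (enum_val i == j)%:R.
Local Notation P := keep_mx.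

Definition vanish_on (x : 'rV[F]_n) := forall j, j \in b -> x 0 j = 0.

Lemma mulmx_keep_tr p (X : 'M[F]_(p, n)) r l : (X *m P^T) r l = X r (enum_val l).
Proof.
rewrite mxE (bigD1 (enum_val l)) //= big1 => [|j /negbTE hj].
  by rewrite !mxE eqxx mulr1 addr0.
by rewrite !mxE eq_sym hj mulr0.
Qed.

Lemma keep_mulmx p (Y : 'M[F]_(n, p)) i j : (P *m Y) i j = Y (enum_val i) j.
Proof.
rewrite mxE (bigD1 (enum_val i)) //= big1 => [|l /negbTE hl].
  by rewrite !mxE eqxx mul1r addr0.
by rewrite !mxE eq_sym hl mul0r.
Qed.

Lemma mulmx_keep_val p (w : 'M[F]_(p, #|~: b|)) r l :
  (w *m P) r (enum_val l) = w r l.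
Proof.
rewrite mxE (bigD1 l) //= big1 => [|l' hl].
  by rewrite !mxE eqxx mulr1 addr0.
by rewrite !mxE (inj_eq enum_val_inj) (negbTE hl) mulr0.
Qed.

Lemma mulmx_keep_vanish (w : 'rV[F]_#|~: b|) : vanish_on (w *m P).
Proof.
move=> j hj; rewrite mxE big1 // => l _; rewrite !mxE.
have : enum_val l \in ~: b := enum_valP l.
by rewrite inE; case: eqP => [->|_]; rewrite ?hj ?mulr0.
Qed.

Lemma vanish_keepK (x : 'rV[F]_n) : vanish_on x -> x *m P^T *m P = x.
Proof.
move=> hx; apply/matrixP => r j; rewrite [r]ord1.
case: (boolP (j \in b)) => hj; first by rewrite mulmx_keep_vanish // hx.
have hjC : j \in ~: b by rewrite inE.
by rewrite -(enum_rankK_in hjC hjC) mulmx_keep_val mulmx_keep_tr.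
Qed.

Lemma keep_mx_tr_id : P *m P^T = 1%:M.
Proof. by apply/matrixP => i j; rewrite mulmx_keep_tr !mxE (inj_eq enum_val_inj). Qed.

Lemma row_free_keep_mx : row_free P.
Proof. by apply/row_freeP; exists P^T; exact: keep_mx_tr_id. Qed.

Lemma rank_kermx_keep_tr : \rank (kermx P^T) = #|b|.
Proof.
have rP : \rank P = #|~: b| by apply/eqP; exact: row_free_keep_mx.
by rewrite mxrank_ker mxrank_tr rP -{1}(card_ord n) -(cardsC b) addnK.
Qed.

Lemma delta_sub_kermx_keep_tr i : i \in b -> (('e_i : 'rV_n) <= kermx P^T)%MS.
Proof.
move=> hi; apply/sub_kermxP/matrixP => r l; rewrite mulmx_keep_tr !mxE.
have : enum_val l \in ~: b := enum_valP l.
by rewrite inE; case: (eqVneq i (enum_val l)) => [<-|]; rewrite ?hi ?andbF.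
Qed.

Lemma kermx_keep_tr_vanish (y : 'rV[F]_n) j :
  y *m P^T = 0 -> j \notin b -> y 0 j = 0.
Proof.
move=> hy hj; have hjC : j \in ~: b by rewrite inE.
by rewrite -(enum_rankK_in hjC hjC) -mulmx_keep_tr hy mxE.
Qed.

Lemma del_princE (A : 'M[F]_n) : del_princ A b = P *m A *m P^T.
Proof. by apply/matrixP => i j; rewrite mulmx_keep_tr keep_mulmx !mxE. Qed.

Definition deltas_in_rowspace_off (A : 'M[F]_n) :=
  forall i, i \in b -> exists2 x : 'rV_n, x *m A = ('e_i : 'rV_n) & vanish_on x.

Variable A : 'M[F]_n.
Local Notation N := (P *m A).
Local Notation K := (kermx (N *m P^T)).

Lemma nullity_del_princE :
  nullity (del_princ A b) = (\rank (K *m N) + \rank (kermx N))%N.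
Proof.
have sNK : (kermx N <= K)%MS.
  by apply/sub_kermxP; rewrite mulmxA mulmx_ker mul0mx.
by rewrite /nullity del_princE -mxrank_ker -(mxrank_mul_ker K N) (capmx_idPr sNK).
Qed.

Lemma mulmx_kermx_sub : (K *m N <= kermx P^T)%MS.
Proof. by apply/sub_kermxP; rewrite -mulmxA mulmx_ker. Qed.

Lemma kermx_keep_sub : (kermx N *m P <= kermx A)%MS.
Proof. by apply/sub_kermxP; rewrite -mulmxA mulmx_ker. Qed.

Lemma PsetP :
  Pset A b <-> (kermx P^T <= K *m N)%MS /\ (kermx A <= kermx N *m P)%MS.
Proof.
have [le1 eq1] := mxrank_leqif_sup mulmx_kermx_sub.
have [le2 eq2] := mxrank_leqif_sup kermx_keep_sub.
rewrite rank_kermx_keep_tr in le1 eq1.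
rewrite mxrankMfree ?row_free_keep_mx // [\rank (kermx A)]mxrank_ker in le2 eq2.
rewrite /Pset nullity_del_princE /nullity -eq1 -eq2.
by split => [? | [/eqP ? /eqP ?]]; first (split; apply/eqP); lia.
Qed.

Lemma kermx_keep_tr_subP :
  (kermx P^T <= K *m N)%MS <-> deltas_in_rowspace_off A.
Proof.
split=> [sub i hi | certs].
  have /submxP [w ->] := submx_trans (delta_sub_kermx_keep_tr hi) sub.
  by exists (w *m K *m P); rewrite ?mulmxA //; apply: mulmx_keep_vanish.
apply/row_subP => r; set y := row r _.
have hy : y *m P^T = 0 by rewrite /y -row_mul mulmx_ker row0.
rewrite (row_sum_delta y); apply: summx_sub => j _.
case: (boolP (j \in b)) => hj; last first.
  by rewrite kermx_keep_tr_vanish // scale0r sub0mx.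
apply: scalemx_sub; have [x hx /vanish_keepK xK] := certs j hj.
have xPK : (x *m P^T <= K)%MS.
  apply/sub_kermxP; rewrite !mulmxA xK hx.
  exact/sub_kermxP/delta_sub_kermx_keep_tr.
by rewrite -hx -{1}xK -mulmxA submxMr.
Qed.

End KeepMx.

(* z_l = z (y A)^T = (z A) y^T, using A^T = A. *)
Lemma sym_kermx_coord_eq0 (F : fieldType) n (A : 'M[F]_n) (z y : 'rV[F]_n) l :
  A^T = A -> z *m A = 0 -> y *m A = ('e_l : 'rV_n) -> z 0 l = 0.
Proof.
move=> hA hz hy.
have -> : z 0 l = (z *m ('e_l : 'rV_n)^T) 0 0.
  rewrite mxE (bigD1 l) //= big1 => [|j hj]; first by rewrite !mxE !eqxx mulr1 addr0.
  by rewrite !mxE (negbTE hj) andbF mulr0.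
by rewrite -hy trmx_mul hA mulmxA hz mul0mx mxE.
Qed.

Section Symmetric.
Variables (F : fieldType) (n : nat) (A : 'M[F]_n).
Hypothesis symA : A^T = A.

Lemma kermx_sub_keep (b : {set 'I_n}) :
  deltas_in_rowspace_off b A ->
  (kermx A <= kermx (keep_mx F b *m A) *m keep_mx F b)%MS.
Proof.
move=> certs; apply/row_subP => r; set z := row r _.
have hz : z *m A = 0 by rewrite /z -row_mul mulmx_ker row0.
have zK : z *m (keep_mx F b)^T *m keep_mx F b = z.
  by apply: vanish_keepK => j /certs [x /(sym_kermx_coord_eq0 symA hz)].
by rewrite -zK submxMr //; apply/sub_kermxP; rewrite !mulmxA zK.
Qed.

Lemma Pset_deltasP (b : {set 'I_n}) : Pset A b <-> deltas_in_rowspace_off b A.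
Proof.
rewrite PsetP kermx_keep_tr_subP.
by split=> [[] // | certs]; split=> //; apply: kermx_sub_keep.
Qed.

Lemma deltas_in_rowspace_offS (b c : {set 'I_n}) :
  c \subset b -> deltas_in_rowspace_off b A -> deltas_in_rowspace_off c A.
Proof.
move=> /subsetP cb certs i /cb /certs [x hx xb].
by exists x => // j /cb; apply: xb.
Qed.

Lemma deltas_in_rowspace_off_pairs (b : {set 'I_n}) : (2 <= #|b|)%N ->
  (forall j l, j \in b -> l \in b -> j != l -> deltas_in_rowspace_off [set j; l] A) ->
  deltas_in_rowspace_off b A.
Proof.
move=> b2 pairs i hi.
have [j] : exists2 j, j \in b & j != i.
  have : (0 < #|b :\ i|)%N by move: b2; rewrite (cardsD1 i b) hi; lia.
  by rewrite card_gt0 => /set0Pn [j]; rewrite !inE => /andP [? ?]; exists j.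
move=> hj nji; have [x hx xij] := pairs j i hj hi nji i (set22 j i).
exists x => // l hl; case: (eqVneq l i) => [-> | nli]; first exact: xij (set22 j i).
have [x' hx' x'il] := pairs l i hl hi nli i (set22 l i).
have [y hy _] := pairs l i hl hi nli l (set21 l i).
have hz : (x - x') *m A = 0 by rewrite mulmxBl hx hx' subrr.
move: (sym_kermx_coord_eq0 symA hz hy); rewrite !mxE x'il ?set21 // subr0; exact.
Qed.

End Symmetric.

Theorem theorem2p5 (R : realFieldType) (n : nat) (A : 'M[R]_n)
  (alpha : {set 'I_n}) :
  A^T = A -> (2 <= #|alpha|)%N ->
  (Pset A alpha <->
   (forall gamma : {set 'I_n}, gamma \subset alpha -> #|gamma| = 2%N -> Pset A gamma)).
Proof.
move=> symA alpha2; rewrite Pset_deltasP //; split=> [certs gamma sga _ | pairs].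
  by apply/(Pset_deltasP symA); apply: deltas_in_rowspace_offS certs.
apply: (deltas_in_rowspace_off_pairs symA alpha2) => j l hj hl njl.
apply/(Pset_deltasP symA)/pairs; last by rewrite cards2 njl.
by apply/subsetP => k; rewrite !inE => /orP [] /eqP ->.
Qed.
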